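(* Let $\hat T$ be a virtual tree with $n$ vertices (each vertex $v$ having current children $C(v)$, $|C(v)|\le 2$, and appended children $A(v)$, $|A(v)|\le 2$) stored in an energy-bound light-first order. Then local messaging in $\hat T$ — where in a local broadcast each vertex (1) sends its message to its current children and (2) unless it is the root, waits until it receives the message from its parent and propagates it to its appended children, and local reduce is defined analogously with reduction — takes $O(n)$ total energy and $O(\log n)$ depth.
   Context: Processors sit on the cells of a 2D grid enumerated by a space-filling curve $K$; sending a message costs energy equal to the Manhattan distance between sender and receiver; depth is the number of parallel communication rounds. Each vertex is stored in one processor at position $p_v$. For a rooted tree, $s(v)$ is the size of the subtree rooted at $v$; the tree is in ($K$-)light-first order if for every vertex $v$ its children can be indexed $u_1,\dots,u_m$ with $s(u_1)\le\dots\le s(u_m)$ so that $u_i$ is at position $p_v+1+\sum_{j<i}s(u_j)$. A light-first order is energy-bound if, for every rooted tree with degree bounded by a constant and $n$ vertices stored in it, the total energy of every vertex sending one message to each of its children is $O(n)$. A virtual tree is a rooted tree in which the children of each vertex $v$ are split into an ordered list $C(v)$ of current children followed by an ordered list $A(v)$ of appended children (as produced from an arbitrary-degree tree by recursively regrouping children: $C(v)=(c_1,\dots,c_d)$ becomes $(c_1,c_{\lfloor d/2\rfloor+1})$ with $A(c_1)=(c_2,\dots,c_{\lfloor d/2\rfloor})$, $A(c_{\lfloor d/2\rfloor+1})=(c_{\lfloor d/2\rfloor+2},\dots,c_d)$, and likewise for $A(v)$). Local broadcast: each vertex's message is delivered to all its children. Local reduce: each vertex receives the reduction, under an associative operation,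 of messages from its children. *)

From mathcomp Require Import all_boot.
Set Implicit Arguments. Unset Strict Implicit. Unset Printing Implicit Defensive.

(* A space-filling curve K enumerates grid cells: position i |-> cell K i. *)
Definition absdiff (m n : nat) : nat := (m - n) + (n - m).
Definition mdist (a b : nat * nat) : nat := absdiff a.1 b.1 + absdiff a.2 b.2.

Section Trees.
Variable V : finType.

(* Every non-root vertex is a child of exactly one vertex,
   the root of none, and every vertex is reachable from the root. *)
Definition child_rel (ch : V -> seq V) : rel V := fun x y => y \in ch x.

Definition is_rooted_tree (ch : V -> seq V) (r : V) : Prop :=
  perm_eq (flatten [seq ch v | v <- enum V]) [seq v <- enum V | v != r]
  /\ forall v, connect (child_rel ch) r v.

Definition subtree_size (ch : V -> seq V) (v : V) : nat :=
  #|[set u | connect (child_rel ch) v u]|.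

Definition light_first (ch : V -> seq V) (p : V -> nat) : Prop :=
  forall v, exists us : seq V,
    [/\ perm_eq us (ch v),
        sorted (fun a b => subtree_size ch a <= subtree_size ch b) us &
        forall i, i < size us ->
          p (nth v us i) = p v + 1 + \sum_(j < i) subtree_size ch (nth v us j)].

Definition tree_energy (K : nat -> nat * nat) (ch : V -> seq V) (p : V -> nat) : nat :=
  \sum_(v : V) \sum_(u <- ch v) mdist (K (p v)) (K (p u)).

(* A list (c_1,...,c_d) is replaced by (c_1, c_{floor(d/2)+1}) (just (c_1)
   when d = 1), with appended lists
   A(c_1) = (c_2,...,c_{floor(d/2)}),  A(c_{floor(d/2)+1}) = (c_{floor(d/2)+2},...,c_d). *)
Definition vheads (L : seq V) : seq V :=
  match L with
  | [::] => [::]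
  | x :: _ => if size L == 1 then [:: x] else [:: x; nth x L (size L)./2]
  end.

Definition regroup_ok (LA : V -> seq V) (L : seq V) : Prop :=
  match L with
  | [::] => True
  | x :: _ => LA x = take ((size L)./2 - 1) (behead L)
              /\ LA (nth x L (size L)./2) = drop ((size L)./2).+1 L
  end.

(* (C, A) is the virtual tree produced from the tree (ch, r): LA v is the
   (not yet regrouped) list of vertices appended to v. *)
Definition virtual_tree_of (ch : V -> seq V) (r : V) (C A : V -> seq V) : Prop :=
  exists LA : V -> seq V, LA r = [::] /\
    forall v, [/\ C v = vheads (ch v), A v = vheads (LA v),
                  regroup_ok LA (ch v) & regroup_ok LA (LA v)].

(* A schedule is a list of messages (round, sender, receiver). *)
Definition sched_energy (K : nat -> nat * nat) (p : V -> nat)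
    (s : seq (nat * V * V)) : nat :=
  \sum_(m <- s) mdist (K (p m.1.2)) (K (p m.2)).
Definition sched_depth (s : seq (nat * V * V)) : nat := \max_(m <- s) m.1.1.

Variables C A : V -> seq V.
Definition vch (v : V) : seq V := C v ++ A v.
Definition vparent (u : V) : option V := [pick v | u \in vch v].

(* Local broadcast: round in which u receives its parent's message. *)
Fixpoint brnd (fuel : nat) (u : V) : nat :=
  match fuel with
  | 0 => 0
  | f.+1 => match vparent u with
            | None => 0
            | Some v => if u \in C v then 1 else (brnd f v).+1
            end
  end.

(* Local reduce: a vertex waits for the partial reductions of its appended
   children, reduces them with its own message, and sends the result to its
   parent; rrnd u is the round in which u sends. *)
Fixpoint rrnd (fuel : nat) (u : V) : nat :=
  match fuel with
  | 0 => 0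
  | f.+1 => (\max_(w <- A u) rrnd f w).+1
  end.

Definition bcast_sched : seq (nat * V * V) :=
  [seq (brnd #|V| u, v, u) | v <- enum V, u <- vch v].
Definition reduce_sched : seq (nat * V * V) :=
  [seq (rrnd #|V| u, u, v) | v <- enum V, u <- vch v].

End Trees.

Definition energy_bound (K : nat -> nat * nat) : Prop :=
  forall D : nat, exists c : nat,
    forall (V : finType) (ch : V -> seq V) (r : V) (p : V -> nat),
      is_rooted_tree ch r -> (forall v, size (ch v) <= D) ->
      light_first ch p -> tree_energy K ch p <= c * #|V|.

From mathcomp Require Import all_boot zify.
Set Implicit Arguments. Unset Strict Implicit. Unset Printing Implicit Defensive.

(* Regrouping a list L keeps every element of L: it becomes a
   head h (at most two of them) or an element of the appended list LA h,
   and 2 |LA h| < |L|.  Hence the virtual children vch v = C v ++ A v give a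
   rooted tree of degree at most 4 on the same vertices, stored in
   light-first order, and both local broadcast and local reduce send exactly
   one message along each of its edges: the energy bound applies directly.
   For the depth, a vertex u that receives the broadcast in round t > 1 got
   it through t - 1 successive appended lists, each more than twice as long
   as the next, so (|LA u| + 1) 2^t <= 2n; likewise the reduction rounds
   below u are bounded by log (|LA u| + 1) + 1. *)

Lemma perm_eq_weighted_subset (T : eqType) (w : T -> nat) (s t : seq T) :
  (forall x, 0 < w x) -> uniq s -> {subset s <= t} ->
  \sum_(x <- t) w x <= \sum_(x <- s) w x -> perm_eq t s.
Proof.
move=> w_gt0; elim: s t => [|x s IH] t.
  by case: t => [|y t] // _ _; rewrite big_nil big_cons; have := w_gt0 y; lia.
case/andP=> xNs uniq_s sub_st; have xt : x \in t by apply: sub_st; rewrite inE eqxx.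
rewrite (perm_big _ (perm_to_rem xt)) !big_cons leq_add2l => le_w.
apply: perm_trans (perm_to_rem xt) _; rewrite perm_cons IH //.
move=> y ys; rewrite (rem_mem _ (sub_st y _)) ?inE ?ys ?orbT //.
by apply: contraNneq xNs => <-.
Qed.

Lemma size_leq_flatten (T : eqType) (U : Type) (F : T -> seq U) (s : seq T) (x : T) :
  x \in s -> size (F x) <= size (flatten [seq F y | y <- s]).
Proof.
elim: s => [|y s IH] //=; rewrite inE size_cat => /orP [/eqP -> | /IH]; lia.
Qed.

Section Regroup.
Variables (V : finType) (LA : V -> seq V).
Implicit Types (L : seq V) (h : V).

Lemma size_vheads L : size (vheads L) <= 2.
Proof. by case: L => [|x t] //=; case: ifP. Qed.

Lemma regroup_flatten L : regroup_ok LA L -> L = flatten [seq h :: LA h | h <- vheads L].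
Proof.
case: L => [|x [|y t]] //=; first by case=> ->.
rewrite -/(size t).+2./2 /= => [[-> ->]]; rewrite cats0 subn1 /=.
have mid_lt : (size t)./2 < size (y :: t) by have := odd_double_half (size t); rewrite /=; lia.
by rewrite -(drop_nth x mid_lt) cat_take_drop.
Qed.

Lemma size_regroup L : regroup_ok LA L -> size L = \sum_(h <- vheads L) (size (LA h)).+1.
Proof.
move=> okL; rewrite {1}(regroup_flatten okL).
by elim: (vheads L) => [|h s IH]; rewrite ?big_nil ?big_cons //= size_cat IH.
Qed.

Lemma regroup_halves L h : regroup_ok LA L -> h \in vheads L -> (size (LA h)).*2 < size L.
Proof.
case: L => [|x [|y t]] //=; first by case=> eq_x _; rewrite inE => /eqP ->; rewrite eq_x.
rewrite -/(size t).+2./2 /= => [[eq_x eq_mid]].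
have := odd_double_half (size t).
rewrite !inE => half_t /orP [] /eqP ->.
  by rewrite eq_x size_take /= subn1 /= ifT; lia.
by rewrite eq_mid /= size_drop /=; lia.
Qed.

Hypothesis okLA : forall h, regroup_ok LA (LA h).

Lemma regroup_ind (P : V -> Prop) L :
  (forall h, P h -> forall h', h' \in vheads (LA h) -> P h') ->
  regroup_ok LA L -> (forall h, h \in vheads L -> P h) ->
  forall u, u \in L -> P u.
Proof.
move=> P_appended; move: {2}(size L) (leqnn (size L)) => n.
elim: n L => [|n IH] L; first by rewrite leqn0 => /nilP ->.
move=> size_L okL P_heads u; rewrite {1}(regroup_flatten okL).
case/flattenP=> _ /mapP [h h_head ->]; rewrite inE => /orP [/eqP -> | u_LA].
  exact: P_heads.
apply: (IH (LA h)) => //; last exact: P_appended (P_heads h h_head).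
by have := regroup_halves okL h_head; lia.
Qed.

End Regroup.

Section VirtualTree.
Variables (V : finType) (ch C A LA : V -> seq V) (r : V).
Hypothesis tree_ch : is_rooted_tree ch r.
Hypothesis LA_root : LA r = [::].
Hypothesis virtual : forall v, [/\ C v = vheads (ch v), A v = vheads (LA v),
                                  regroup_ok LA (ch v) & regroup_ok LA (LA v)].

Let C_vheads v : C v = vheads (ch v). Proof. by case: (virtual v). Qed.
Let A_vheads v : A v = vheads (LA v). Proof. by case: (virtual v). Qed.
Let ok_ch v : regroup_ok LA (ch v). Proof. by case: (virtual v). Qed.
Let ok_LA v : regroup_ok LA (LA v). Proof. by case: (virtual v). Qed.

Let nonroot := [seq v <- enum V | v != r].
Let vchildren := flatten [seq vch C A v | v <- enum V].

Lemma mem_ch u : u != r -> exists v, u \in ch v.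
Proof.
move=> ur; have : u \in nonroot by rewrite mem_filter ur mem_enum.
by rewrite -(perm_mem tree_ch.1) => /flattenP [_ /mapP [v _ ->]]; exists v.
Qed.

Lemma size_LA_lt u : size (LA u) < #|V|.
Proof.
have [->|ur] := eqVneq u r; first by rewrite LA_root; apply/card_gt0P; exists r.
have [v uv] := mem_ch ur.
have size_ch : size (ch v) <= #|V|.
  apply: leq_trans (size_leq_flatten ch (mem_enum _ v)) _.
  by rewrite (perm_size tree_ch.1) size_filter cardE count_size.
apply: (regroup_ind ok_LA (P := fun u => size (LA u) < #|V|) _ (ok_ch v)) uv.
  by move=> h lt_h h' /(regroup_halves (ok_LA h)); lia.
by move=> h /(regroup_halves (ok_ch v)); lia.
Qed.

Lemma ch_sub_vch v : {subset ch v <= vchildren}.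
Proof.
have mem_vch w u : u \in vch C A w -> u \in vchildren.
  by move=> uw; apply/flattenP; exists (vch C A w); first exact: map_f (mem_enum _ _).
apply: (regroup_ind ok_LA _ (ok_ch v)) => [h _ h' h_app|h h_head].
  by apply: (mem_vch h); rewrite mem_cat A_vheads h_app orbT.
by apply: (mem_vch v); rewrite mem_cat C_vheads h_head.
Qed.

Lemma connect_vch v : connect (child_rel (vch C A)) r v.
Proof.
apply: (connect_sub _ (tree_ch.2 v)) => x y yx.
apply: (regroup_ind ok_LA (P := connect (child_rel (vch C A)) x) _ (ok_ch x)) yx.
  move=> h xh h' h_app; apply: connect_trans xh (connect1 _).
  by rewrite /child_rel mem_cat A_vheads h_app orbT.
by move=> h h_head; apply: connect1; rewrite /child_rel mem_cat C_vheads h_head.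
Qed.

(* Weighting each vertex u by |LA u| + 1, both lists have total weight
   |nonroot| + sum_v |LA v|; since nonroot is duplicate-free and contained in
   vchildren, they must be permutations of each other. *)
Lemma perm_vchildren : perm_eq vchildren nonroot.
Proof.
have weight_sum s : \sum_(x <- s) (size (LA x)).+1 = size s + \sum_(x <- s) size (LA x).
  by under eq_bigr do rewrite -add1n; rewrite big_split /= sum1_size.
apply: (perm_eq_weighted_subset (w := fun x => (size (LA x)).+1)) => //.
- exact/filter_uniq/enum_uniq.
- move=> u; rewrite mem_filter => /andP [ur _].
  by have [v /ch_sub_vch] := mem_ch ur.
rewrite /vchildren big_flatten big_map weight_sum.
under eq_bigr => v _ do rewrite big_cat /= C_vheads A_vheads -!size_regroup //.
rewrite big_split /= -(perm_size tree_ch.1) size_flatten /shape -map_comp sumnE big_map.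
rewrite leq_add2l /nonroot [X in _ <= X]big_filter.
by rewrite [X in X <= _](bigD1_seq r) ?mem_enum ?enum_uniq //= LA_root.
Qed.

Lemma vch_tree : is_rooted_tree (vch C A) r.
Proof. by split; [exact: perm_vchildren | exact: connect_vch]. Qed.

Lemma size_vch v : size (vch C A v) <= 4.
Proof.
rewrite size_cat C_vheads A_vheads.
by have := size_vheads (ch v); have := size_vheads (LA v); lia.
Qed.

Lemma brnd_weight f u : (size (LA u)).+1 * 2 ^ brnd C A f u <= #|V| * 2.
Proof.
elim: f u => [|f IH] u; have := size_LA_lt u; simpl brnd; first by rewrite expn0; lia.
rewrite /vparent; case: pickP => [v u_vch | _]; last by rewrite expn0; lia.
case: ifP => u_C; first by rewrite expn1; lia.
have u_A : u \in vheads (LA v) by move: u_vch; rewrite mem_cat u_C -A_vheads.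
have := regroup_halves (ok_LA v) u_A; have := IH v.
by rewrite expnS -muln2; set e := 2 ^ _; nia.
Qed.

Lemma brnd_log f u : brnd C A f u <= (trunc_log 2 #|V|).+1.
Proof.
rewrite -trunc_log2_double; last by have := size_LA_lt u; lia.
apply: trunc_log_max => //; rewrite -muln2; apply: leq_trans (brnd_weight f u).
by rewrite leq_pmull.
Qed.

Lemma rrnd_log_LA f u : rrnd A f u <= (trunc_log 2 (size (LA u)).+1).+1.
Proof.
elim: f u => [|f IH] u //=.
rewrite ltnS; apply/bigmax_leqP_seq => w; rewrite A_vheads => w_app _.
apply: leq_trans (IH w) _; rewrite -trunc_log2_double // leq_trunc_log //.
by have := regroup_halves (ok_LA u) w_app; lia.
Qed.

Lemma rrnd_log f u : rrnd A f u <= (trunc_log 2 #|V|).+1.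
Proof. by apply: leq_trans (rrnd_log_LA f u) _; rewrite ltnS leq_trunc_log ?size_LA_lt. Qed.

End VirtualTree.

Lemma mdistC a b : mdist a b = mdist b a.
Proof. by rewrite /mdist /absdiff (addnC (a.1 - b.1)) (addnC (a.2 - b.2)). Qed.

Section Schedules.
Variables (V : finType) (C A : V -> seq V) (K : nat -> nat * nat) (p : V -> nat).

Lemma sched_energy_bcast : sched_energy K p (bcast_sched C A) = tree_energy K (vch C A) p.
Proof. by rewrite /sched_energy /bcast_sched big_allpairs_dep /tree_energy big_enum. Qed.

Lemma sched_energy_reduce : sched_energy K p (reduce_sched C A) = tree_energy K (vch C A) p.
Proof.
rewrite /sched_energy /reduce_sched big_allpairs_dep /tree_energy big_enum /=.
by apply: eq_bigr => v _; apply: eq_bigr => u _; rewrite mdistC.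
Qed.

Lemma sched_depth_leq (s : seq (nat * V * V)) b :
  (forall m, m \in s -> m.1.1 <= b) -> sched_depth s <= b.
Proof. by move=> le_b; apply/bigmax_leqP_seq => m m_s _; apply: le_b. Qed.

End Schedules.

Theorem mainTheorem6 (K : nat -> nat * nat) (Kinj : injective K)
    (HK : energy_bound K) :
  exists c : nat,
    forall (V : finType) (ch C A : V -> seq V) (r : V) (p : V -> nat),
      is_rooted_tree ch r ->
      virtual_tree_of ch r C A ->
      light_first (vch C A) p ->
      [/\ sched_energy K p (bcast_sched C A) <= c * #|V|,
          sched_depth (bcast_sched C A) <= c * (trunc_log 2 #|V|).+1,
          sched_energy K p (reduce_sched C A) <= c * #|V| &
          sched_depth (reduce_sched C A) <= c * (trunc_log 2 #|V|).+1].
Proof.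
have [c energy_deg4] := HK 4.
exists c.+1 => V ch C A r p tree_ch [LA [LA_root virtual]] light.
have energy := energy_deg4 V _ r p (vch_tree tree_ch LA_root virtual) (size_vch virtual) light.
have energy_le : tree_energy K (vch C A) p <= c.+1 * #|V|.
  by apply: leq_trans energy _; rewrite leq_mul2r leqnSn orbT.
have depth_le : (trunc_log 2 #|V|).+1 <= c.+1 * (trunc_log 2 #|V|).+1 by rewrite leq_pmull.
rewrite sched_energy_bcast sched_energy_reduce; split => //; apply: leq_trans depth_le;
  apply: sched_depth_leq => _ /allpairsPdep [v [u [_ _ ->]]].
- exact: (brnd_log tree_ch LA_root virtual).
- exact: (rrnd_log tree_ch LA_root virtual).
Qed.
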